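(* Let $\Gamma_0>0$. There exist $h_0>0$, $C_0>0$ and $\eta_0>0$ such that for all $h\in(0,h_0)$ and every eigenpair $(\lambda,\psi)$ of $\mathcal H_{\mathsf{BO},\mathsf{Tri}}(h)$ with $|\lambda-\frac18|\le\Gamma_0h^{2/3}$, $$\int_{-\pi\sqrt2}^0e^{\eta_0h^{-1}|x|^{3/2}}\big(|\psi|^2+|h^{2/3}\partial_x\psi|^2\big)\,dx\le C_0\|\psi\|^2.$$
   Context: For $h>0$, $\mathcal H_{\mathsf{BO},\mathsf{Tri}}(h)=-h^2\partial_x^2+\frac{\pi^2}{4(x+\pi\sqrt2)^2}$ is the Dirichlet realization on $L^2((-\pi\sqrt2,0))$; $\|\cdot\|$ is the $L^2((-\pi\sqrt2,0))$ norm. *)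

From Stdlib Require Import Reals Lra.
From Coquelicot Require Import Coquelicot.
Open Scope R_scope.

Definition aBO : R := - (PI * sqrt 2).

Definition VBO (x : R) : R := PI ^ 2 / (4 * (x + PI * sqrt 2) ^ 2).

Definition in_I (x : R) : Prop := aBO < x < 0.

(* A real function f is an eigenfunction of the Dirichlet realization of
   -h^2 d^2/dx^2 + V on L^2((-pi sqrt 2, 0)) for the real eigenvalue lam:
   - f is twice differentiable on the open interval and solves the ODE there;
   - f is in the form domain H^1_0: f' is square integrable and f tends to 0
     at both endpoints (Dirichlet condition). *)
Definition eigen_fun (h lam : R) (f : R -> R) : Prop :=
  (forall x, in_I x -> ex_derive f x /\ ex_derive (Derive f) x) /\
  (forall x, in_I x ->
      - h ^ 2 * Derive (Derive f) x + VBO x * f x = lam * f x) /\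
  ex_RInt_gen (fun x => (Derive f x) ^ 2) (at_right aBO) (at_left 0) /\
  filterlim f (at_right aBO) (locally 0) /\
  filterlim f (at_left 0) (locally 0).

(* Eigenpair (lam, psi) with psi = u + i v complex valued, nonzero. *)
Definition is_eigenpair (h lam : R) (u v : R -> R) : Prop :=
  eigen_fun h lam u /\ eigen_fun h lam v /\
  (exists x, in_I x /\ (u x <> 0 \/ v x <> 0)).

Definition L2sq (u v : R -> R) : R :=
  RInt_gen (fun x => u x ^ 2 + v x ^ 2) (at_right aBO) (at_left 0).

Definition agmon_integrand (eta h : R) (u v : R -> R) (x : R) : R :=
  exp (eta / h * Rpower (Rabs x) (3 / 2)) *
  ((u x ^ 2 + v x ^ 2) +
   (Rpower h (2 / 3)) ^ 2 * ((Derive u x) ^ 2 + (Derive v x) ^ 2)).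

From Stdlib Require Import Reals Lra Classical.
From Coquelicot Require Import Coquelicot.
Open Scope R_scope.

(* Put t = h^(2/3) and w = exp (eta |x|^(3/2) / h).  For an eigenfunction f the eigenvalue
   equation gives (h^2 w f f')' = w (h^2 f'^2 + 2 h p f f' + (V - lam) f^2) with p = h w' / (2 w),
   so p^2 = O(eta^2 |x|).  Since V - 1/8 >= c |x| and |lam - 1/8| <= G t, for eta small this
   density dominates t w (f^2 + t^2 f'^2) up to an error t C f^2: where c |x| >> G t because
   V - lam - p^2 is large, and where |x| = O(t) because w is bounded there independently of h
   (t^(3/2) = h).  On compact subintervals the boundary terms h^2 w f f' can be made arbitrarily
   small, since f f' = (f^2)' / 2 and f^2 -> 0 at both ends; exhausting the interval bounds the
   weighted integral by C times the squared L^2 norm. *)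

Lemma at_right_interval (a c : R) (P : R -> Prop) :
  a < c -> (forall y, a < y < c -> P y) -> at_right a P.
Proof.
  intros Hac HP. exists (mkposreal (c - a) ltac:(lra)). intros y Hy Hay.
  change (Rabs (y - a) < c - a) in Hy. apply Rabs_def2 in Hy. apply HP. lra.
Qed.

Lemma at_left_interval (c b : R) (P : R -> Prop) :
  c < b -> (forall y, c < y < b -> P y) -> at_left b P.
Proof.
  intros Hcb HP. exists (mkposreal (b - c) ltac:(lra)). intros y Hy Hyb.
  change (Rabs (y - b) < b - c) in Hy. apply Rabs_def2 in Hy. apply HP. lra.
Qed.

Lemma at_right_witness (a c : R) (P : R -> Prop) :
  at_right a P -> a < c -> exists d, a < d < c /\ forall y, a < y <= d -> P y.
Proof.
  intros [e He] Hac.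
  assert (Hm : 0 < Rmin (e / 2) ((c - a) / 2))
    by (apply Rmin_pos; pose proof (cond_pos e); lra).
  pose proof (Rmin_l (e / 2) ((c - a) / 2)). pose proof (Rmin_r (e / 2) ((c - a) / 2)).
  exists (a + Rmin (e / 2) ((c - a) / 2)). split; [lra |].
  intros y Hy. apply He; [| lra].
  change (Rabs (y - a) < e). rewrite Rabs_right by lra. pose proof (cond_pos e). lra.
Qed.

Lemma at_left_witness (c b : R) (P : R -> Prop) :
  at_left b P -> c < b -> exists d, c < d < b /\ forall y, d <= y < b -> P y.
Proof.
  intros [e He] Hcb.
  assert (Hm : 0 < Rmin (e / 2) ((b - c) / 2))
    by (apply Rmin_pos; pose proof (cond_pos e); lra).
  pose proof (Rmin_l (e / 2) ((b - c) / 2)). pose proof (Rmin_r (e / 2) ((b - c) / 2)).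
  exists (b - Rmin (e / 2) ((b - c) / 2)). split; [lra |].
  intros y Hy. apply He; [| lra].
  change (Rabs (y - b) < e). rewrite Rabs_left by lra. pose proof (cond_pos e). lra.
Qed.

Lemma filterlim_0_abs_lt {F : (R -> Prop) -> Prop} {FF : Filter F} (f : R -> R) (e : R) :
  filterlim f F (locally 0) -> 0 < e -> F (fun y => Rabs (f y) < e).
Proof.
  intros Hf He. generalize (proj1 (filterlim_locally f 0) Hf (mkposreal e He)).
  apply filter_imp. intros y Hy. change (Rabs (f y - 0) < e) in Hy.
  rewrite Rminus_0_r in Hy. exact Hy.
Qed.

Lemma filterlim_sq_sum_0 {F : (R -> Prop) -> Prop} {FF : Filter F} (u v : R -> R) :
  filterlim u F (locally 0) -> filterlim v F (locally 0) ->
  filterlim (fun x => u x ^ 2 + v x ^ 2) F (locally 0).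
Proof.
  intros Hu Hv.
  assert (Hsq : filterlim (fun y : R => y ^ 2) (locally 0) (locally (0 ^ 2)))
    by (apply (@ex_derive_continuous R_AbsRing R_NormedModule); auto_derive; exact I).
  replace (locally 0) with (locally (plus (0 ^ 2) (0 ^ 2))) by (f_equal; unfold plus; simpl; ring).
  apply (filterlim_comp_2 (G := locally (0 ^ 2)) (H := locally (0 ^ 2))
           (fun x => u x ^ 2) (fun x => v x ^ 2) plus).
  - exact (filterlim_comp _ _ _ u (fun y => y ^ 2) _ _ _ Hu Hsq).
  - exact (filterlim_comp _ _ _ v (fun y => y ^ 2) _ _ _ Hv Hsq).
  - apply (@filterlim_plus R_AbsRing R_NormedModule).
Qed.

Lemma bounded_of_vanishing_at_ends (a b : R) (f : R -> R) :
  a < b -> (forall x, a < x < b -> continuous f x) ->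
  filterlim f (at_right a) (locally 0) -> filterlim f (at_left b) (locally 0) ->
  exists M, forall x, a < x < b -> Rabs (f x) <= M.
Proof.
  intros Hab Hc Ha Hb.
  destruct (at_right_witness a ((a + b) / 2) _ (filterlim_0_abs_lt f 1 Ha Rlt_0_1)
    ltac:(lra)) as [a1 [Ha1 Hfa]].
  destruct (at_left_witness ((a + b) / 2) b _ (filterlim_0_abs_lt f 1 Hb Rlt_0_1)
    ltac:(lra)) as [b1 [Hb1 Hfb]].
  destruct (continuity_ab_maj (fun x => Rabs (f x)) a1 b1) as [m [Hm _]]; [lra | |].
  { intros x Hx. apply (continuity_pt_comp f Rabs x); [| apply Rcontinuity_abs].
    apply continuity_pt_filterlim, Hc. lra. }
  exists (1 + Rabs (f m)). intros x Hx. pose proof (Rabs_pos (f m)).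
  destruct (Rle_or_lt x a1); [pose proof (Hfa x ltac:(lra)); lra |].
  destruct (Rle_or_lt b1 x); [pose proof (Hfb x ltac:(lra)); lra |].
  pose proof (Hm x ltac:(lra)). lra.
Qed.

Lemma MVT_inner (a b : R) (q q' : R -> R) (x y : R) :
  (forall z, a < z < b -> is_derive q z (q' z)) -> a < x -> x < y -> y < b ->
  exists z, x <= z <= y /\ q y - q x = q' z * (y - x).
Proof.
  intros Hd Hx Hxy Hy.
  destruct (MVT_gen q x y q') as [z [Hz Heq]].
  - intros z Hz. rewrite Rmin_left, Rmax_right in Hz by lra. apply Hd. lra.
  - intros z Hz. rewrite Rmin_left, Rmax_right in Hz by lra.
    apply continuity_pt_filterlim, (@ex_derive_continuous R_AbsRing R_NormedModule).
    exists (q' z). apply Hd. lra.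
  - rewrite Rmin_left, Rmax_right in Hz by lra. eauto.
Qed.

Section NonnegativeVanishing.

Variables (a b : R) (q q' : R -> R).
Hypothesis q_derive : forall x, a < x < b -> is_derive q x (q' x).
Hypothesis q_nonneg : forall x, a < x < b -> 0 <= q x.

(* If q' stayed >= eps near b, q would grow by a fixed amount there, contradicting q -> 0. *)
Lemma derive_lt_near_right_end (c eps : R) :
  filterlim q (at_left b) (locally 0) -> a < c < b -> 0 < eps ->
  exists y, c < y < b /\ q' y < eps.
Proof.
  intros Hq Hc Heps. apply NNPP. intros Hn.
  set (y0 := (c + b) / 2).
  destruct (at_left_witness ((y0 + b) / 2) b _
    (filterlim_0_abs_lt q (eps * (b - y0) / 2) Hq ltac:(unfold y0; nra)) ltac:(unfold y0; lra))
    as [d [Hd Hqd]].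
  destruct (MVT_inner a b q q' y0 d q_derive) as [z [Hz Heq]]; try (unfold y0 in *; lra).
  assert (eps <= q' z).
  { apply Rnot_lt_le. intros Hlt. apply Hn. exists z. unfold y0 in *. split; [lra | exact Hlt]. }
  pose proof (Hqd d ltac:(lra)). pose proof (q_nonneg y0 ltac:(unfold y0; lra)).
  pose proof (Rle_abs (q d)). nra.
Qed.

Lemma derive_gt_near_left_end (c eps : R) :
  filterlim q (at_right a) (locally 0) -> a < c < b -> 0 < eps ->
  exists y, a < y < c /\ - eps < q' y.
Proof.
  intros Hq Hc Heps. apply NNPP. intros Hn.
  set (y0 := (a + c) / 2).
  destruct (at_right_witness a ((a + y0) / 2) _
    (filterlim_0_abs_lt q (eps * (y0 - a) / 2) Hq ltac:(unfold y0; nra)) ltac:(unfold y0; lra))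
    as [d [Hd Hqd]].
  destruct (MVT_inner a b q q' d y0 q_derive) as [z [Hz Heq]]; try (unfold y0 in *; lra).
  assert (q' z <= - eps).
  { apply Rnot_lt_le. intros Hlt. apply Hn. exists z. unfold y0 in *. split; [lra | exact Hlt]. }
  pose proof (Hqd d ltac:(lra)). pose proof (q_nonneg y0 ltac:(unfold y0; lra)).
  pose proof (Rle_abs (q d)). nra.
Qed.

End NonnegativeVanishing.

Section InnerIntegrals.

Variables (a b : R) (g : R -> R).
Hypothesis g_cont : forall x, a < x < b -> continuous g x.

Lemma ex_RInt_inner (c d : R) : a < c -> c <= d -> d < b -> ex_RInt g c d.
Proof.
  intros Hc Hcd Hd. apply (@ex_RInt_continuous R_CompleteNormedModule).
  intros z Hz. rewrite Rmin_left, Rmax_right in Hz by lra. apply g_cont. lra.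
Qed.

Hypothesis g_nonneg : forall x, a < x < b -> 0 <= g x.

Lemma RInt_inner_le (c' c d d' : R) :
  a < c' -> c' <= c -> c <= d -> d <= d' -> d' < b -> RInt g c d <= RInt g c' d'.
Proof.
  intros H1 H2 H3 H4 H5.
  rewrite <- (RInt_Chasles g c' d d'), <- (RInt_Chasles g c' c d)
    by (apply ex_RInt_inner; lra).
  assert (0 <= RInt g c' c)
    by (apply RInt_ge_0; [lra | apply ex_RInt_inner | intros; apply g_nonneg]; lra).
  assert (0 <= RInt g d d')
    by (apply RInt_ge_0; [lra | apply ex_RInt_inner | intros; apply g_nonneg]; lra).
  unfold plus; simpl. lra.
Qed.

(* The limit is the least upper bound of the integrals over compact subintervals. *)
Lemma is_RInt_gen_of_inner_bound (K : R) :
  a < b -> (forall c d, a < c -> c < d -> d < b -> RInt g c d <= K) ->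
  exists l, is_RInt_gen g (at_right a) (at_left b) l /\ l <= K /\
    forall c d, a < c -> c < d -> d < b -> RInt g c d <= l.
Proof.
  intros Hab HK.
  set (S := fun r => exists c d, (a < c /\ c < d /\ d < b) /\ r = RInt g c d).
  assert (HS : bound S) by (exists K; intros r [c [d [Hcd ->]]]; apply HK; tauto).
  assert (HS0 : exists r, S r).
  { exists (RInt g ((2 * a + b) / 3) ((a + 2 * b) / 3)).
    exists ((2 * a + b) / 3), ((a + 2 * b) / 3). split; [lra | reflexivity]. }
  destruct (completeness S HS HS0) as [l [Hub Hlub]].
  assert (Hle : forall c d, a < c -> c < d -> d < b -> RInt g c d <= l)
    by (intros c d ? ? ?; apply Hub; exists c, d; auto).
  exists l.
  split; [| split; [apply Hlub; intros r [c [d [Hcd ->]]]; apply HK; tauto | exact Hle]].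
  set (m := (a + b) / 2).
  apply filterlimi_lim_ext_loc with (f := fun cd => RInt g (fst cd) (snd cd)).
  { apply Filter_prod with (Q := fun c => a < c < m) (R := fun d => m < d < b).
    - apply at_right_interval with m; [unfold m; lra | auto].
    - apply at_left_interval with m; [unfold m; lra | auto].
    - intros c d Hc Hd. simpl. apply (@RInt_correct R_CompleteNormedModule), ex_RInt_inner; lra. }
  apply filterlim_locally. intros eps.
  assert (Hnear : exists c0 d0, (a < c0 /\ c0 < d0 /\ d0 < b) /\ l - eps < RInt g c0 d0).
  { apply NNPP. intros Hn. pose proof (cond_pos eps).
    enough (l <= l - eps) by lra.
    apply Hlub. intros r [c [d [Hcd ->]]]. apply Rnot_lt_le. intros Hlt. apply Hn. eauto. }
  destruct Hnear as [c0 [d0 [Hcd0 Hl0]]].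
  apply Filter_prod with (Q := fun c => a < c < c0) (R := fun d => d0 < d < b).
  - apply at_right_interval with c0; [lra | auto].
  - apply at_left_interval with d0; [lra | auto].
  - intros c d Hc Hd. simpl in Hc, Hd.
    change (Rabs (RInt g c d - l) < eps). apply Rabs_def1.
    + pose proof (Hle c d ltac:(lra) ltac:(lra) ltac:(lra)). pose proof (cond_pos eps). lra.
    + pose proof (RInt_inner_le c c0 d0 d ltac:(lra) ltac:(lra) ltac:(lra) ltac:(lra) ltac:(lra)).
      lra.
Qed.

End InnerIntegrals.

Definition agmon_slope : R := / (8 * (PI * sqrt 2)).

Lemma PI_sqrt2_pos : 0 < PI * sqrt 2.
Proof. apply Rmult_lt_0_compat; [exact PI_RGT_0 | apply sqrt_lt_R0; lra]. Qed.

Lemma aBO_neg : aBO < 0.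
Proof. unfold aBO. pose proof PI_sqrt2_pos. lra. Qed.

Lemma agmon_slope_pos : 0 < agmon_slope.
Proof. unfold agmon_slope. pose proof PI_sqrt2_pos. apply Rinv_0_lt_compat. lra. Qed.

Lemma agmon_slope_lt_1 : agmon_slope < 1.
Proof.
  unfold agmon_slope. pose proof PI2_3_2.
  assert (1 < sqrt 2) by (rewrite <- sqrt_1; apply sqrt_lt_1_alt; lra).
  rewrite <- Rinv_1. apply Rinv_lt_contravar; nra.
Qed.

(* Writing L = pi sqrt 2 and s = x + L, the difference of the two sides is
   (L - s) (L (L + s) - s^2) / (8 L s^2). *)
Lemma VBO_sub_eighth_ge (x : R) : in_I x -> agmon_slope * (- x) <= VBO x - 1 / 8.
Proof.
  unfold in_I, aBO, VBO, agmon_slope. intros [H1 H2].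
  pose proof PI_sqrt2_pos. set (L := PI * sqrt 2) in *.
  assert (HPI : PI ^ 2 = L ^ 2 / 2).
  { unfold L. replace ((PI * sqrt 2) ^ 2) with (PI ^ 2 * (sqrt 2 * sqrt 2)) by ring.
    rewrite sqrt_sqrt by lra. field. }
  rewrite HPI. set (s := x + L).
  assert (0 < s) by (unfold s; lra). assert (s < L) by (unfold s; lra).
  replace (- x) with (L - s) by (unfold s; ring).
  assert (Heq : L ^ 2 / 2 / (4 * s ^ 2) - 1 / 8 - / (8 * L) * (L - s) =
                (L - s) * (L * (L + s) - s ^ 2) / (8 * L * s ^ 2)) by (field; lra).
  assert (0 <= (L - s) * (L * (L + s) - s ^ 2) / (8 * L * s ^ 2)).
  { apply Rmult_le_pos; [apply Rmult_le_pos; nra |].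
    left. apply Rinv_0_lt_compat. pose proof (pow_lt s 2 ltac:(lra)). nra. }
  lra.
Qed.

Lemma Rpower_2_3_pos (h : R) : 0 < Rpower h (2 / 3).
Proof. apply exp_pos. Qed.

Lemma Rpower_2_3_mul_sqrt (h : R) : 0 < h -> Rpower h (2 / 3) * sqrt (Rpower h (2 / 3)) = h.
Proof.
  intros Hh. rewrite <- Rpower_sqrt by apply Rpower_2_3_pos.
  rewrite Rpower_mult, <- Rpower_plus. replace (2 / 3 + 2 / 3 * / 2) with 1 by field.
  apply Rpower_1. exact Hh.
Qed.

Lemma Rpower_2_3_cube (h : R) : 0 < h -> Rpower h (2 / 3) ^ 3 = h ^ 2.
Proof.
  intros Hh. rewrite <- (Rpower_2_3_mul_sqrt h Hh) at 2.
  set (t := Rpower h (2 / 3)). assert (0 < t) by apply Rpower_2_3_pos.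
  replace ((t * sqrt t) ^ 2) with (t ^ 2 * (sqrt t * sqrt t)) by ring.
  rewrite sqrt_sqrt by lra. ring.
Qed.

Lemma exp_le_mono (x y : R) : x <= y -> exp x <= exp y.
Proof. intros [H | ->]; [left; apply exp_increasing, H | right; reflexivity]. Qed.

Lemma mul_sqrt_le (y z : R) : 0 <= y -> y <= z -> y * sqrt y <= z * sqrt z.
Proof.
  intros Hy Hyz. pose proof (sqrt_le_1_alt y z Hyz). pose proof (sqrt_pos y). nra.
Qed.

Definition agmon_weight (eta h x : R) : R := exp (eta / h * ((- x) * sqrt (- x))).

Lemma agmon_integrand_weight (eta h : R) (u v : R -> R) (x : R) : x < 0 ->
  agmon_integrand eta h u v x = agmon_weight eta h x *
    ((u x ^ 2 + v x ^ 2) + Rpower h (2 / 3) ^ 2 * (Derive u x ^ 2 + Derive v x ^ 2)).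
Proof.
  intros Hx. unfold agmon_integrand, agmon_weight. rewrite Rabs_left by exact Hx.
  replace (3 / 2) with (1 + / 2) by field.
  rewrite Rpower_plus, Rpower_1, Rpower_sqrt by lra. reflexivity.
Qed.

Lemma is_derive_agmon_weight (eta h x : R) : 0 < h -> x < 0 ->
  is_derive (agmon_weight eta h) x (- (3 / 2) * eta / h * sqrt (- x) * agmon_weight eta h x).
Proof.
  intros Hh Hx. unfold agmon_weight. auto_derive; [lra |].
  assert (Hs : sqrt (- x) * sqrt (- x) = - x) by (apply sqrt_sqrt; lra).
  assert (0 < sqrt (- x)) by (apply sqrt_lt_R0; lra).
  set (s := sqrt (- x)) in *. rewrite <- Hs. field. lra.
Qed.

Lemma is_derive_weighted_flux (h lam : R) (f w : R -> R) (x w' : R) :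
  0 < h -> eigen_fun h lam f -> in_I x -> is_derive w x w' ->
  is_derive (fun y => h ^ 2 * (w y * (f y * Derive f y))) x
    (w x * (h ^ 2 * Derive f x ^ 2 + (VBO x - lam) * f x ^ 2) + h ^ 2 * w' * f x * Derive f x).
Proof.
  intros Hh [Hder [Hode _]] Hx Hw.
  destruct (Hder x Hx) as [Hf Hf'].
  assert (Hf'' : Derive (Derive f) x = (VBO x - lam) * f x / h ^ 2).
  { pose proof (Hode x Hx).
    replace (Derive (Derive f) x) with (h ^ 2 * Derive (Derive f) x / h ^ 2) by (field; lra).
    f_equal. lra. }
  auto_derive.
  - repeat split; auto. exists w'. exact Hw.
  - change (Derive (fun y => w y) x) with (Derive w x).
    change (Derive (fun y => f y) x) with (Derive f x).
    change (Derive (fun y => Derive f y) x) with (Derive (Derive f) x).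
    rewrite (is_derive_unique w x w' Hw), Hf''. field. lra.
Qed.

Definition flux (eta h : R) (f : R -> R) (x : R) : R :=
  h ^ 2 * (agmon_weight eta h x * (f x * Derive f x)).

(* The weight's logarithmic derivative is 2 p / h with p x = -(3/4) eta sqrt(-x). *)
Definition flux_density (eta h lam : R) (f : R -> R) (x : R) : R :=
  agmon_weight eta h x * (h ^ 2 * Derive f x ^ 2 +
    2 * h * (- (3 / 4) * eta * sqrt (- x)) * f x * Derive f x + (VBO x - lam) * f x ^ 2).

Lemma is_derive_flux (eta h lam : R) (f : R -> R) (x : R) :
  0 < h -> eigen_fun h lam f -> in_I x ->
  is_derive (flux eta h f) x (flux_density eta h lam f x).
Proof.
  intros Hh Hf Hx.
  replace (flux_density eta h lam f x) with
    (agmon_weight eta h x * (h ^ 2 * Derive f x ^ 2 + (VBO x - lam) * f x ^ 2) +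
     h ^ 2 * (- (3 / 2) * eta / h * sqrt (- x) * agmon_weight eta h x) * f x * Derive f x)
    by (unfold flux_density; field; lra).
  apply is_derive_weighted_flux; auto.
  apply is_derive_agmon_weight; [exact Hh | apply Hx].
Qed.

Lemma continuous_flux_density (eta h lam : R) (f : R -> R) (x : R) :
  eigen_fun h lam f -> in_I x -> continuous (flux_density eta h lam f) x.
Proof.
  intros [Hder _] Hx. destruct (Hder x Hx) as [Hf Hf'].
  apply (@ex_derive_continuous R_AbsRing R_NormedModule).
  destruct Hx as [Hx1 Hx2]. unfold aBO in Hx1.
  unfold flux_density, agmon_weight, VBO. auto_derive.
  repeat split; auto; try lra. intros H0. nra.
Qed.

(* With m = h f1 + p f and K = om (m^2 + 2 Y f^2): the density is at least K - G t E f^2,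
   its derivative part om h^2 f1^2 is at most 2 K, and t om f^2 is at most K / (2 G) + t E f^2. *)
Lemma weighted_energy_ineq (t h om E G Y p Vl f f1 : R) :
  0 < t -> h ^ 2 = t ^ 3 -> 0 < G -> 0 <= om -> 0 <= Y ->
  4 * Y - G * t <= Vl -> p ^ 2 <= Y ->
  om * (G * t - Y) <= G * t * E -> t * om <= om * Y / G + t * E ->
  t * (om * (f ^ 2 + t ^ 2 * f1 ^ 2)) <=
  (/ G + 2) * (om * (h ^ 2 * f1 ^ 2 + 2 * h * p * f * f1 + Vl * f ^ 2)) +
  t * (E * (1 + (/ G + 2) * G) * f ^ 2).
Proof.
  intros Ht Hht HG Hom HY HVl Hp Hnear Hfar.
  set (m := h * f1 + p * f).
  set (K := om * m ^ 2 + 2 * (om * Y) * f ^ 2).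
  assert (Hf2 : 0 <= f ^ 2) by nra.
  assert (HomY : 0 <= om * Y) by nra.
  assert (Hom_m : 0 <= om * m ^ 2) by nra.
  assert (HK : 0 <= K) by (unfold K; nra).
  assert (HJ : K - G * t * E * f ^ 2 <=
               om * (h ^ 2 * f1 ^ 2 + 2 * h * p * f * f1 + Vl * f ^ 2)).
  { replace (om * (h ^ 2 * f1 ^ 2 + 2 * h * p * f * f1 + Vl * f ^ 2))
      with (om * m ^ 2 + om * (Vl - p ^ 2) * f ^ 2) by (unfold m; ring).
    assert (om * (3 * Y - G * t) <= om * (Vl - p ^ 2)) by (apply Rmult_le_compat_l; lra).
    unfold K. nra. }
  assert (Hder : om * (h ^ 2 * f1 ^ 2) <= 2 * K).
  { assert (h ^ 2 * f1 ^ 2 <= 2 * m ^ 2 + 2 * Y * f ^ 2).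
    { replace (h ^ 2 * f1 ^ 2) with ((m - p * f) ^ 2) by (unfold m; ring).
      assert (p ^ 2 * f ^ 2 <= Y * f ^ 2) by (apply Rmult_le_compat_r; lra).
      pose proof (pow2_ge_0 (m + p * f)). nra. }
    unfold K. nra. }
  assert (Hval : t * (om * f ^ 2) <= K / (2 * G) + t * E * f ^ 2).
  { assert (t * om * f ^ 2 <= (om * Y / G + t * E) * f ^ 2) by (apply Rmult_le_compat_r; lra).
    assert (om * Y / G * f ^ 2 <= K / (2 * G)).
    { unfold Rdiv. rewrite Rinv_mult. assert (0 < / G) by (apply Rinv_0_lt_compat; lra).
      unfold K. nra. }
    nra. }
  assert (HD : 0 <= / (2 * G)) by (left; apply Rinv_0_lt_compat; lra).
  assert (HG2 : / (2 * G) <= / G) by (apply Rinv_le_contravar; lra).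
  replace (t * (om * (f ^ 2 + t ^ 2 * f1 ^ 2))) with (t * (om * f ^ 2) + om * (h ^ 2 * f1 ^ 2))
    by (rewrite Hht; ring).
  unfold Rdiv in Hval. nra.
Qed.

Lemma near_far_split (t om E G Y : R) :
  0 < t -> 0 < G -> 0 <= om -> 0 <= Y -> 0 <= E -> (Y < G * t -> om <= E) ->
  om * (G * t - Y) <= G * t * E /\ t * om <= om * Y / G + t * E.
Proof.
  intros Ht HG Hom HY HE Hnear.
  assert (0 <= om * Y / G) by (apply Rmult_le_pos; [nra | left; apply Rinv_0_lt_compat; lra]).
  destruct (Rlt_or_le Y (G * t)) as [Hlt | Hge].
  - specialize (Hnear Hlt). assert (0 < G * t) by nra.
    assert (om * (G * t) <= E * (G * t)) by (apply Rmult_le_compat_r; lra).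
    split; nra.
  - assert (0 <= G * t * E) by (apply Rmult_le_pos; nra).
    split; [nra |].
    assert (t <= Y / G) by (apply Rmult_le_reg_l with G; [lra | field_simplify; lra]).
    assert (t * om <= Y / G * om) by (apply Rmult_le_compat_r; lra).
    assert (0 <= t * E) by nra. unfold Rdiv in *. nra.
Qed.

Definition agmon_eta : R := 2 * agmon_slope / 9.

Lemma agmon_eta_pos : 0 < agmon_eta.
Proof. unfold agmon_eta. pose proof agmon_slope_pos. lra. Qed.

Definition agmon_gain (G : R) : R := / G + 2.

(* Outside -x < near_radius G * t the potential gap c (-x) / 4 dominates G t. *)
Definition near_radius (G : R) : R := 4 * G / agmon_slope.

Definition near_weight_bound (G : R) : R :=
  exp (agmon_eta * (near_radius G * sqrt (near_radius G))).

Definition agmon_const (G : R) : R := near_weight_bound G * (1 + agmon_gain G * G).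

Lemma agmon_const_pos (G : R) : 0 < G -> 0 < agmon_const G.
Proof.
  intros HG. unfold agmon_const, agmon_gain. apply Rmult_lt_0_compat; [apply exp_pos |].
  assert (0 < / G) by (apply Rinv_0_lt_compat; lra). nra.
Qed.

(* Since t^(3/2) = h, the weight at -x = r t is exp (eta r^(3/2)), independent of h. *)
Lemma agmon_weight_near (G h x : R) : 0 < G -> 0 < h -> x < 0 ->
  - x < near_radius G * Rpower h (2 / 3) -> agmon_weight agmon_eta h x <= near_weight_bound G.
Proof.
  intros HG Hh Hx Hnear.
  pose proof (Rpower_2_3_mul_sqrt h Hh) as Hth. pose proof (Rpower_2_3_pos h).
  set (t := Rpower h (2 / 3)) in *. set (r := near_radius G) in *.
  assert (Hr : 0 < r)
    by (unfold r, near_radius; pose proof agmon_slope_pos; apply Rdiv_lt_0_compat; lra).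
  assert (Hs : - x * sqrt (- x) <= r * sqrt r * h).
  { pose proof (mul_sqrt_le (- x) (r * t) ltac:(lra) ltac:(lra)) as Hmono.
    rewrite sqrt_mult_alt in Hmono by lra. rewrite <- Hth. nra. }
  unfold agmon_weight, near_weight_bound. fold r.
  apply exp_le_mono. unfold agmon_eta. pose proof agmon_slope_pos.
  apply Rmult_le_reg_l with h; [exact Hh |].
  replace (h * (2 * agmon_slope / 9 / h * (- x * sqrt (- x))))
    with (2 * agmon_slope / 9 * (- x * sqrt (- x))) by (field; lra).
  nra.
Qed.

Lemma flux_density_pointwise (G h lam : R) (f : R -> R) (x : R) :
  0 < G -> 0 < h -> eigen_fun h lam f ->
  Rabs (lam - 1 / 8) <= G * Rpower h (2 / 3) -> in_I x ->
  Rpower h (2 / 3) * (agmon_weight agmon_eta h x *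
    (f x ^ 2 + Rpower h (2 / 3) ^ 2 * Derive f x ^ 2)) <=
  agmon_gain G * flux_density agmon_eta h lam f x + Rpower h (2 / 3) * (agmon_const G * f x ^ 2).
Proof.
  intros HG Hh Hf Hlam Hx.
  pose proof (VBO_sub_eighth_ge x Hx) as HV. pose proof (Rle_abs (lam - 1 / 8)).
  pose proof agmon_slope_pos. pose proof agmon_slope_lt_1.
  pose proof (Rpower_2_3_pos h) as Ht. pose proof (Rpower_2_3_cube h Hh).
  destruct Hx as [_ Hx].
  assert (Hsq : sqrt (- x) * sqrt (- x) = - x) by (apply sqrt_sqrt; lra).
  set (t := Rpower h (2 / 3)) in *.
  assert (Hom : 0 <= agmon_weight agmon_eta h x) by (left; apply exp_pos).
  assert (HE : 0 <= near_weight_bound G) by (left; apply exp_pos).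
  assert (HY : 0 <= agmon_slope * (- x) / 4) by nra.
  assert (Hweight : agmon_slope * (- x) / 4 < G * t ->
                    agmon_weight agmon_eta h x <= near_weight_bound G).
  { intros Hlt. apply agmon_weight_near; try lra.
    unfold near_radius. fold t. apply Rmult_lt_reg_l with (agmon_slope / 4); [lra |].
    replace (agmon_slope / 4 * (4 * G / agmon_slope * t)) with (G * t) by (field; lra). nra. }
  destruct (near_far_split _ _ _ _ _ Ht HG Hom HY HE Hweight) as [Hnear Hfar].
  unfold agmon_const, agmon_gain, flux_density.
  apply weighted_energy_ineq with (Y := agmon_slope * (- x) / 4); try lra.
  replace ((- (3 / 4) * agmon_eta * sqrt (- x)) ^ 2)
    with (agmon_slope * agmon_slope / 36 * (sqrt (- x) * sqrt (- x)))
    by (unfold agmon_eta; field).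
  rewrite Hsq. nra.
Qed.

Lemma agmon_weight_le_on_I (eta h x : R) : 0 <= eta -> 0 < h -> in_I x ->
  agmon_weight eta h x <= exp (eta / h * ((PI * sqrt 2) * sqrt (PI * sqrt 2))).
Proof.
  intros Heta Hh [Hx1 Hx2]. unfold aBO in Hx1. apply exp_le_mono, Rmult_le_compat_l.
  - apply Rle_mult_inv_pos; lra.
  - apply mul_sqrt_le; lra.
Qed.

Lemma mul_le_of_lt_bound (w W z e : R) : 0 <= w <= W -> z < e -> 0 < e -> w * z <= W * e.
Proof. intros Hw Hz He. destruct (Rle_or_lt z 0); nra. Qed.

Section Eigenpair.

Variables (G h lam : R) (u v : R -> R).
Hypothesis G_pos : 0 < G.
Hypothesis h_pos : 0 < h.
Hypothesis u_eigen : eigen_fun h lam u.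
Hypothesis v_eigen : eigen_fun h lam v.
Hypothesis lam_near : Rabs (lam - 1 / 8) <= G * Rpower h (2 / 3).

Let t := Rpower h (2 / 3).
Let A := agmon_integrand agmon_eta h u v.
Let q (x : R) : R := u x ^ 2 + v x ^ 2.
Let F (x : R) : R := flux agmon_eta h u x + flux agmon_eta h v x.

Lemma agmon_integrand_cont (x : R) : in_I x -> continuous A x.
Proof.
  intros Hx.
  destruct (proj1 u_eigen x Hx) as [Hu Hu']. destruct (proj1 v_eigen x Hx) as [Hv Hv'].
  apply continuous_ext_loc with (fun y => agmon_weight agmon_eta h y *
    ((u y ^ 2 + v y ^ 2) + t ^ 2 * (Derive u y ^ 2 + Derive v y ^ 2))).
  - generalize (open_lt _ _ (proj2 Hx)). apply filter_imp. intros y Hy.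
    symmetry. apply agmon_integrand_weight. exact Hy.
  - apply (@ex_derive_continuous R_AbsRing R_NormedModule).
    destruct Hx as [_ Hx]. unfold agmon_weight. auto_derive. repeat split; auto; lra.
Qed.

Lemma agmon_integrand_nonneg (x : R) : in_I x -> 0 <= A x.
Proof.
  intros Hx. unfold A. rewrite agmon_integrand_weight by apply Hx.
  apply Rmult_le_pos; [left; apply exp_pos |]. pose proof (pow2_ge_0 t). nra.
Qed.

Lemma sq_sum_cont (x : R) : in_I x -> continuous q x.
Proof.
  intros Hx. destruct (proj1 u_eigen x Hx) as [Hu _]. destruct (proj1 v_eigen x Hx) as [Hv _].
  apply (@ex_derive_continuous R_AbsRing R_NormedModule). unfold q. auto_derive. auto.
Qed.

Lemma RInt_inner_le_L2sq (c d : R) : aBO < c -> c < d -> d < 0 -> RInt q c d <= L2sq u v.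
Proof.
  intros Hc Hcd Hd. pose proof aBO_neg as Ha.
  destruct u_eigen as [Hu_der [_ [_ [Hu_l Hu_r]]]].
  destruct v_eigen as [Hv_der [_ [_ [Hv_l Hv_r]]]].
  assert (Hcont : forall f, (forall x, in_I x -> ex_derive f x /\ ex_derive (Derive f) x) ->
                    forall x, aBO < x < 0 -> continuous f x)
    by (intros f Hf x Hx; apply (@ex_derive_continuous R_AbsRing R_NormedModule), Hf, Hx).
  destruct (bounded_of_vanishing_at_ends aBO 0 u Ha (Hcont u Hu_der) Hu_l Hu_r) as [Mu HMu].
  destruct (bounded_of_vanishing_at_ends aBO 0 v Ha (Hcont v Hv_der) Hv_l Hv_r) as [Mv HMv].
  destruct (is_RInt_gen_of_inner_bound aBO 0 q sq_sum_cont
              (fun x _ => ltac:(unfold q; nra)) ((Mu ^ 2 + Mv ^ 2) * - aBO) Ha)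
    as [l [Hl [_ Hinner]]].
  - intros c1 d1 Hc1 Hcd1 Hd1.
    assert (HM : forall x, aBO < x < 0 -> q x <= Mu ^ 2 + Mv ^ 2).
    { intros x Hx. pose proof (HMu x Hx). pose proof (HMv x Hx).
      pose proof (Rabs_pos (u x)). pose proof (Rabs_pos (v x)).
      unfold q. rewrite <- (pow2_abs (u x)), <- (pow2_abs (v x)). nra. }
    apply Rle_trans with (RInt (fun _ => Mu ^ 2 + Mv ^ 2) c1 d1).
    + apply RInt_le; [lra | apply (ex_RInt_inner aBO 0); [exact sq_sum_cont | lra ..]
                     | apply ex_RInt_const | intros x Hx; apply HM; lra].
    + rewrite RInt_const. unfold scal; simpl; unfold mult; simpl.
      assert (0 <= Mu ^ 2 + Mv ^ 2) by nra. nra.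
  - replace (L2sq u v) with l by (symmetry; apply is_RInt_gen_unique; exact Hl).
    apply Hinner; auto.
Qed.

Lemma agmon_integrand_le_flux (x : R) : in_I x ->
  t * A x <=
  agmon_gain G * (flux_density agmon_eta h lam u x + flux_density agmon_eta h lam v x) +
  t * (agmon_const G * q x).
Proof.
  intros Hx.
  pose proof (flux_density_pointwise G h lam u x G_pos h_pos u_eigen lam_near Hx) as Hu.
  pose proof (flux_density_pointwise G h lam v x G_pos h_pos v_eigen lam_near Hx) as Hv.
  unfold A, q. rewrite agmon_integrand_weight by apply Hx. fold t in Hu, Hv |- *. nra.
Qed.

Lemma agmon_integral_le_flux (c d : R) : aBO < c -> c <= d -> d < 0 ->
  t * RInt A c d <= agmon_gain G * (F d - F c) + t * (agmon_const G * RInt q c d).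
Proof.
  intros Hc Hcd Hd.
  assert (HI : forall x, Rmin c d <= x <= Rmax c d -> in_I x)
    by (intros x Hx; rewrite Rmin_left, Rmax_right in Hx by lra; split; lra).
  set (fd := fun x => flux_density agmon_eta h lam u x + flux_density agmon_eta h lam v x).
  assert (HF : is_RInt fd c d (minus (F d) (F c))).
  { apply (is_RInt_derive F fd); intros x Hx.
    - apply (is_derive_plus (flux agmon_eta h u) (flux agmon_eta h v));
        apply is_derive_flux; auto.
    - apply (continuous_plus (flux_density agmon_eta h lam u) (flux_density agmon_eta h lam v));
        apply continuous_flux_density; auto. }
  assert (Hq : ex_RInt q c d) by (apply (ex_RInt_inner aBO 0); [exact sq_sum_cont | lra ..]).
  assert (HA : ex_RInt A c d)
    by (apply (ex_RInt_inner aBO 0); [exact agmon_integrand_cont | lra ..]).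
  apply (is_RInt_le (fun x => t * A x)
           (fun x => agmon_gain G * fd x + t * (agmon_const G * q x)) c d);
    [exact Hcd | exact (is_RInt_scal _ _ _ t _ (RInt_correct _ _ _ HA)) | |].
  - exact (is_RInt_plus _ _ _ _ _ _ (is_RInt_scal _ _ _ _ _ HF)
             (is_RInt_scal _ _ _ t _
                (is_RInt_scal _ _ _ (agmon_const G) _ (RInt_correct _ _ _ Hq)))).
  - intros x Hx. apply agmon_integrand_le_flux. split; lra.
Qed.

(* F = h^2 w (q' / 2) with q = u^2 + v^2 >= 0 vanishing at both ends, so q' takes values
   of the right sign near each end, and w is bounded on the interval. *)
Lemma flux_ends_small (eps c d : R) : 0 < eps -> aBO < c -> c < d -> d < 0 ->
  exists c' d', aBO < c' <= c /\ d <= d' < 0 /\ F d' - F c' <= eps.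
Proof.
  intros Heps Hc Hcd Hd.
  set (Z := fun x => u x * Derive u x + v x * Derive v x).
  set (W := exp (agmon_eta / h * ((PI * sqrt 2) * sqrt (PI * sqrt 2)))).
  assert (HW : 0 < W) by apply exp_pos.
  assert (Hweight : forall x, in_I x -> 0 <= agmon_weight agmon_eta h x <= W).
  { intros x Hx. split; [left; apply exp_pos |].
    apply agmon_weight_le_on_I; [left; exact agmon_eta_pos | exact h_pos | exact Hx]. }
  assert (HFZ : forall x, F x = h ^ 2 * (agmon_weight agmon_eta h x * Z x))
    by (intros x; unfold F, flux, Z; ring).
  assert (Hq' : forall x, aBO < x < 0 -> is_derive q x (2 * Z x)).
  { intros x Hx.
    destruct (proj1 u_eigen x Hx) as [Hu _]. destruct (proj1 v_eigen x Hx) as [Hv _].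
    unfold q, Z. auto_derive; [auto |].
    change (Derive (fun y => u y) x) with (Derive u x).
    change (Derive (fun y => v y) x) with (Derive v x). ring. }
  assert (Hq0 : forall x, aBO < x < 0 -> 0 <= q x) by (intros x _; unfold q; nra).
  destruct u_eigen as [_ [_ [_ [Hu_l Hu_r]]]]. destruct v_eigen as [_ [_ [_ [Hv_l Hv_r]]]].
  set (e := eps / (2 * (h ^ 2 * W))).
  assert (He : 0 < e).
  { unfold e. apply Rdiv_lt_0_compat; [lra |]. pose proof (pow_lt h 2 h_pos). nra. }
  destruct (derive_gt_near_left_end aBO 0 q (fun x => 2 * Z x) Hq' Hq0 c (2 * e)
              (filterlim_sq_sum_0 u v Hu_l Hv_l) ltac:(lra) ltac:(lra)) as [c' [Hc' HZc]].
  destruct (derive_lt_near_right_end aBO 0 q (fun x => 2 * Z x) Hq' Hq0 d (2 * e)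
              (filterlim_sq_sum_0 u v Hu_r Hv_r) ltac:(lra) ltac:(lra)) as [d' [Hd' HZd]].
  exists c', d'. split; [lra | split; [lra |]].
  rewrite !HFZ.
  pose proof (mul_le_of_lt_bound _ W (Z d') e (Hweight d' ltac:(split; lra)) ltac:(lra) He).
  pose proof (mul_le_of_lt_bound _ W (- Z c') e (Hweight c' ltac:(split; lra)) ltac:(lra) He).
  assert (Heq : h ^ 2 * (W * e) = eps / 2) by (unfold e; field; split; nra).
  pose proof (pow2_ge_0 h). nra.
Qed.

Lemma agmon_inner_bound (c d : R) : aBO < c -> c < d -> d < 0 ->
  RInt A c d <= agmon_const G * L2sq u v.
Proof.
  intros Hc Hcd Hd. apply le_epsilon. intros eps Heps.
  assert (Ht : 0 < t) by apply Rpower_2_3_pos.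
  assert (Hgain : 0 < agmon_gain G)
    by (unfold agmon_gain; pose proof (Rinv_0_lt_compat G G_pos); lra).
  assert (HC : 0 < agmon_const G) by (apply agmon_const_pos, G_pos).
  destruct (flux_ends_small (t * eps / agmon_gain G) c d) as [c' [d' [Hc' [Hd' HF]]]]; try lra.
  { apply Rdiv_lt_0_compat; nra. }
  pose proof (agmon_integral_le_flux c' d' ltac:(lra) ltac:(lra) ltac:(lra)) as Hint.
  pose proof (RInt_inner_le aBO 0 A agmon_integrand_cont agmon_integrand_nonneg c' c d d'
                ltac:(lra) ltac:(lra) ltac:(lra) ltac:(lra) ltac:(lra)) as Hmono.
  pose proof (RInt_inner_le_L2sq c' d' ltac:(lra) ltac:(lra) ltac:(lra)) as HL2.
  assert (Hgap : agmon_gain G * (F d' - F c') <= t * eps).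
  { apply Rmult_le_compat_l with (r := agmon_gain G) in HF; [| lra].
    replace (agmon_gain G * (t * eps / agmon_gain G)) with (t * eps) in HF by (field; lra).
    exact HF. }
  apply Rmult_le_compat_l with (r := t) in Hmono; [| lra].
  apply Rmult_le_compat_l with (r := t * agmon_const G) in HL2; [| nra].
  apply Rmult_le_reg_l with t; [exact Ht |]. nra.
Qed.

End Eigenpair.

Theorem proposition4p3 (Gamma0 : R) :
  0 < Gamma0 ->
  exists h0 C0 eta0 : R, 0 < h0 /\ 0 < C0 /\ 0 < eta0 /\
    forall (h lam : R) (u v : R -> R),
      0 < h < h0 ->
      is_eigenpair h lam u v ->
      Rabs (lam - 1 / 8) <= Gamma0 * Rpower h (2 / 3) ->
      ex_RInt_gen (agmon_integrand eta0 h u v) (at_right aBO) (at_left 0) /\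
      RInt_gen (agmon_integrand eta0 h u v) (at_right aBO) (at_left 0)
        <= C0 * L2sq u v.
Proof.
  intros HG. exists 1, (agmon_const Gamma0), agmon_eta.
  split; [lra |]. split; [apply agmon_const_pos, HG |].
  split; [exact agmon_eta_pos |].
  (* The estimate holds for every h > 0, so the choice h0 = 1 is arbitrary. *)
  intros h lam u v [Hh _] [Hu [Hv _]] Hlam.
  destruct (is_RInt_gen_of_inner_bound aBO 0 (agmon_integrand agmon_eta h u v)
              (agmon_integrand_cont h lam u v Hu Hv)
              (agmon_integrand_nonneg h u v)
              (agmon_const Gamma0 * L2sq u v) aBO_neg
              (agmon_inner_bound Gamma0 h lam u v HG Hh Hu Hv Hlam)) as [l [Hl [HlK _]]].
  split; [exists l; exact Hl |].
  rewrite (is_RInt_gen_unique _ _ Hl). exact HlK.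
Qed.
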